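(* Let $p\geq 5$ be prime. Then all odd numbers $$2k(n,p)^{+}+1=(2n+1)p+4N(p/6),\quad n=0,1,2,\ldots,$$ $$2k(n,p)^{-}+1=(2n+1)p-4N(p/6),\quad n=1,2,\ldots,$$ are non-ranks. More precisely: (a) If $p\equiv 1\pmod 6$, then $3(2k(n,p)^{+}+1)\mp 2$ is the pair $([3(2n+1)+2]p-4,\,[3(2n+1)+2]p)$, and $3(2k(n,p)^{-}+1)\mp 2$ is the pair $([3(2n+1)-2]p,\,[3(2n+1)-2]p+4)$. (b) If $p\equiv -1\pmod 6$, then $3(2k(n,p)^{+}+1)\mp 2$ is the pair $([3(2n+1)+2]p,\,[3(2n+1)+2]p+4)$, and $3(2k(n,p)^{-}+1)\mp 2$ is the pair $([3(2n+1)-2]p-4,\,[3(2n+1)-2]p)$. Each of these pairs contains a composite number.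
   Context: $N(x)$ denotes the integer nearest to the real number $x$ (for prime $p\geq5$, $N(p/6)=(p-1)/6$ if $p\equiv1\pmod6$ and $(p+1)/6$ if $p\equiv-1\pmod6$). An odd integer $t\geq 3$ is a twin-4 rank if $3t-2$ and $3t+2$ are both prime, and a non-rank otherwise. *)

From mathcomp Require Import all_boot.
Set Implicit Arguments. Unset Strict Implicit. Unset Printing Implicit Defensive.

(* nearest integer to the rational m/d (d > 0), rounding halves up:
   floor(m/d + 1/2) = (2m + d) %/ (2d). For m = p prime >= 5, d = 6,
   m/d is never a half-integer, so this is the unambiguous N(p/6). *)
Definition nearest_div (m d : nat) : nat := (2 * m + d) %/ (2 * d).

Definition twin4_rank (t : nat) : bool :=
  [&& odd t, 3 <= t, prime (3 * t - 2) & prime (3 * t + 2)].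

Definition twin4_nonrank (t : nat) : bool :=
  [&& odd t, 3 <= t & ~~ twin4_rank t].

Definition composite (m : nat) : bool := (1 < m) && ~~ prime m.

From mathcomp Require Import all_boot zify.

(* For a prime p >= 5 we have 6 N(p/6) = p -+ 1, so 3((2n+1)p +- 4N(p/6)) -+ 2
   collapses to a multiple of p by 3(2n+1) +- 2 > 1; one of the two numbers
   3t - 2, 3t + 2 is therefore composite and t cannot be a twin-4 rank. *)

Lemma composite_mul a b : 1 < a -> 1 < b -> composite (a * b).
Proof.
move=> a_gt1 b_gt1; rewrite /composite; apply/andP; split; first nia.
apply/negP => /primeP [_ prime_dvd].
have /orP [/eqP|/eqP] := prime_dvd a (dvdn_mulr b (dvdnn a)); nia.
Qed.

Lemma prime_mod6 {p} : prime p -> 5 <= p -> p %% 6 = 1 \/ p %% 6 = 5.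
Proof.
move=> /primeP [_ prime_dvd] p_ge5.
have not2 : ~~ (2 %| p) by apply/negP => /prime_dvd /orP [/eqP|/eqP]; lia.
have not3 : ~~ (3 %| p) by apply/negP => /prime_dvd /orP [/eqP|/eqP]; lia.
lia.
Qed.

Lemma nearest_div6_mod1 {p} : p %% 6 = 1 -> 6 * nearest_div p 6 + 1 = p.
Proof. by rewrite /nearest_div; lia. Qed.

Lemma nearest_div6_mod5 {p} : p %% 6 = 5 -> 6 * nearest_div p 6 = p + 1.
Proof. by rewrite /nearest_div; lia. Qed.

Lemma twin4_nonrank_factor {t m q} :
  3 <= t -> 1 < m -> 1 < q -> odd m -> odd q ->
  3 * t - 2 = m * q \/ 3 * t + 2 = m * q ->
  twin4_nonrank t /\ (composite (3 * t - 2) || composite (3 * t + 2)).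
Proof.
move=> t_ge3 m_gt1 q_gt1 m_odd q_odd eq_mq.
have mq_odd : odd (m * q) by rewrite oddM m_odd.
have t_odd : odd t by case: eq_mq; lia.
have cmp : composite (3 * t - 2) || composite (3 * t + 2).
  by case: eq_mq => ->; rewrite composite_mul ?orbT.
split=> //; rewrite /twin4_nonrank /twin4_rank t_odd t_ge3 /=.
by case/orP: cmp => /andP [_ /negbTE ->]; rewrite ?andbF.
Qed.

Section TwinFourFamilies.

Variable p : nat.
Hypothesis p_prime : prime p.
Hypothesis p_ge5 : 5 <= p.

Let p_gt1 : 1 < p. Proof. exact: prime_gt1. Qed.

Let p_odd : odd p. Proof. by have [] := prime_mod6 p_prime p_ge5; lia. Qed.

Lemma twin4_plus_family n :
  let t := (2 * n + 1) * p + 4 * nearest_div p 6 in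
  [/\ twin4_nonrank t,
      p %% 6 = 1 ->
        3 * t - 2 = (3 * (2 * n + 1) + 2) * p - 4 /\
        3 * t + 2 = (3 * (2 * n + 1) + 2) * p,
      p %% 6 = 5 ->
        3 * t - 2 = (3 * (2 * n + 1) + 2) * p /\
        3 * t + 2 = (3 * (2 * n + 1) + 2) * p + 4
    & composite (3 * t - 2) || composite (3 * t + 2)].
Proof.
have m_gt1 : 1 < 3 * (2 * n + 1) + 2 by lia.
have m_odd : odd (3 * (2 * n + 1) + 2) by lia.
have [p_mod|p_mod] := prime_mod6 p_prime p_ge5.
- move: (nearest_div6_mod1 p_mod); move: (nearest_div p 6) => N N_eq t.
  have t_ge3 : 3 <= t by rewrite /t; nia.
  have [e1 e2] : 3 * t - 2 = (3 * (2 * n + 1) + 2) * p - 4 /\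
                 3 * t + 2 = (3 * (2 * n + 1) + 2) * p by split; rewrite /t; nia.
  have [] := twin4_nonrank_factor t_ge3 m_gt1 p_gt1 m_odd p_odd (or_intror e2).
  by split=> // /[!p_mod].
- move: (nearest_div6_mod5 p_mod); move: (nearest_div p 6) => N N_eq t.
  have t_ge3 : 3 <= t by rewrite /t; nia.
  have [e1 e2] : 3 * t - 2 = (3 * (2 * n + 1) + 2) * p /\
                 3 * t + 2 = (3 * (2 * n + 1) + 2) * p + 4 by split; rewrite /t; nia.
  have [] := twin4_nonrank_factor t_ge3 m_gt1 p_gt1 m_odd p_odd (or_introl e1).
  by split=> // /[!p_mod].
Qed.

Lemma twin4_minus_family n : 1 <= n ->
  let t := (2 * n + 1) * p - 4 * nearest_div p 6 in
  [/\ twin4_nonrank t,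
      p %% 6 = 1 ->
        3 * t - 2 = (3 * (2 * n + 1) - 2) * p /\
        3 * t + 2 = (3 * (2 * n + 1) - 2) * p + 4,
      p %% 6 = 5 ->
        3 * t - 2 = (3 * (2 * n + 1) - 2) * p - 4 /\
        3 * t + 2 = (3 * (2 * n + 1) - 2) * p
    & composite (3 * t - 2) || composite (3 * t + 2)].
Proof.
move=> n_ge1; have m_gt1 : 1 < 3 * (2 * n + 1) - 2 by lia.
have m_odd : odd (3 * (2 * n + 1) - 2) by lia.
have [p_mod|p_mod] := prime_mod6 p_prime p_ge5.
- move: (nearest_div6_mod1 p_mod); move: (nearest_div p 6) => N N_eq t.
  have t_ge3 : 3 <= t by rewrite /t; nia.
  have [e1 e2] : 3 * t - 2 = (3 * (2 * n + 1) - 2) * p /\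
                 3 * t + 2 = (3 * (2 * n + 1) - 2) * p + 4 by split; rewrite /t; nia.
  have [] := twin4_nonrank_factor t_ge3 m_gt1 p_gt1 m_odd p_odd (or_introl e1).
  by split=> // /[!p_mod].
- move: (nearest_div6_mod5 p_mod); move: (nearest_div p 6) => N N_eq t.
  have t_ge3 : 3 <= t by rewrite /t; nia.
  have [e1 e2] : 3 * t - 2 = (3 * (2 * n + 1) - 2) * p - 4 /\
                 3 * t + 2 = (3 * (2 * n + 1) - 2) * p by split; rewrite /t; nia.
  have [] := twin4_nonrank_factor t_ge3 m_gt1 p_gt1 m_odd p_odd (or_intror e2).
  by split=> // /[!p_mod].
Qed.

End TwinFourFamilies.

Theorem lemma2p5 (p : nat) (pp : prime p) (p5 : 5 <= p) :
  (forall n : nat,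
     let t := (2 * n + 1) * p + 4 * nearest_div p 6 in
     [/\ twin4_nonrank t,
         p %% 6 = 1 ->
           3 * t - 2 = (3 * (2 * n + 1) + 2) * p - 4 /\
           3 * t + 2 = (3 * (2 * n + 1) + 2) * p,
         p %% 6 = 5 ->
           3 * t - 2 = (3 * (2 * n + 1) + 2) * p /\
           3 * t + 2 = (3 * (2 * n + 1) + 2) * p + 4
       & composite (3 * t - 2) || composite (3 * t + 2)]) /\
  (forall n : nat, 1 <= n ->
     let t := (2 * n + 1) * p - 4 * nearest_div p 6 in
     [/\ twin4_nonrank t,
         p %% 6 = 1 ->
           3 * t - 2 = (3 * (2 * n + 1) - 2) * p /\
           3 * t + 2 = (3 * (2 * n + 1) - 2) * p + 4,
         p %% 6 = 5 ->
           3 * t - 2 = (3 * (2 * n + 1) - 2) * p - 4 /\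
           3 * t + 2 = (3 * (2 * n + 1) - 2) * p
       & composite (3 * t - 2) || composite (3 * t + 2)]).
Proof.
split; [exact: twin4_plus_family | exact: twin4_minus_family].
Qed.
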